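(* Let $Q$ be a conjunctive query without self-joins with connected subqueries $Q_1,\dots,Q_s$. Then $Q$ contains a hard structure if and only if $Q_i$ contains a hard structure for some $i\in\{1,\dots,s\}$.
   Context: CQ $Q(\mathbf{A}) :- R_1(\mathbb{A}_1),\dots,R_p(\mathbb{A}_p)$ with distinct relation symbols, $\mathrm{attr}(R_i)=\mathbb{A}_i$, $\mathrm{attr}(Q)=\bigcup_i\mathbb{A}_i$, $\mathrm{head}(Q)=\mathbf{A}$. Standing assumption: distinct relations have distinct attribute sets. Connected subqueries: the subqueries formed by the relations of each connected component of the graph on relations with an edge between two relations iff they share an attribute (head of each is $\mathrm{head}(Q)$ intersected with its attributes). $R_j$ is exogenous if another relation $R_i$ has $\mathrm{attr}(R_i)\subsetneq\mathrm{attr}(R_j)$, endogenous otherwise. A path between relations $R_i,R_j$ using only attributes in a set $S$ is a sequence of relations from $R_i$ to $R_j$ with consecutive relations sharing an attribute of $S$. Triad-like structure: three endogenous relations such that for each pair there is a path between them using only attributes in $\mathrm{attr}(Q)\setminus(\mathrm{head}(Q)\cup\mathrm{attr}(R))$, $R$ the third. $R_j$ is dominated by $R_i$ if (1) $\mathrm{attr}(R_i)\subseteq\mathrm{attr}(R_j)$; (2) for every $R_k$ with $\mathrm{attr}(R_i)\setminus\mathrm{attr}(R_k)\ne\emptyset$, $\mathrm{attr}(R_j)\cap\mathrm{attr}(R_k)\subseteq\mathrm{attr}(R_i)\cap\mathrm{head}(Q)$; (3) $\mathrm{attr}(R_i)\subseteq\mathrm{head}(Q)$ or $\mathrm{head}(Q)\subseteq\mathrm{attr}(R_i)$;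 non-dominated relations are dominated by no other relation. Strand: two non-dominated relations $R_i,R_j$ with $\mathrm{head}(Q)\cap\mathrm{attr}(R_i)\ne\mathrm{head}(Q)\cap\mathrm{attr}(R_j)$ and $(\mathrm{attr}(R_i)\cap\mathrm{attr}(R_j))\setminus\mathrm{head}(Q)\ne\emptyset$. The head join of non-dominated relations is the full query of non-dominated relations restricted to $\mathrm{head}(Q)$; a full query is hierarchical if for all attributes $A,B$ the sets of relations containing them are nested or disjoint. A query contains a hard structure if it has a triad-like structure or a strand, or the head join of its non-dominated relations is non-hierarchical. *)

From mathcomp Require Import all_boot.
Set Implicit Arguments. Unset Strict Implicit. Unset Printing Implicit Defensive.

(* A self-join-free CQ is given by a finite type I of relation symbols
   (relation R_i for i : I), a finite type A of attributes, the attribute sets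
   attr : I -> {set A}, and the head.  A (sub)query is represented by a set
   S : {set I} of its relations together with its head H : {set A}. *)

Definition attrQ (I A : finType) (attr : I -> {set A}) (S : {set I}) : {set A} :=
  \bigcup_(i in S) attr i.

Definition exogenous (I A : finType) (attr : I -> {set A}) (S : {set I}) (j : I) : bool :=
  [exists i in S, attr i \proper attr j].

Definition endogenous (I A : finType) (attr : I -> {set A}) (S : {set I}) (j : I) : bool :=
  (j \in S) && ~~ exogenous attr S j.

Definition step (I A : finType) (attr : I -> {set A}) (S : {set I}) (X : {set A}) : rel I :=
  fun i k => [&& i \in S, k \in S & attr i :&: attr k :&: X != set0].

Definition path_using (I A : finType) (attr : I -> {set A}) (S : {set I}) (X : {set A})
  (i j : I) : bool := connect (step attr S X) i j.

Definition triad_like (I A : finType) (attr : I -> {set A}) (S : {set I}) (H : {set A}) : Prop :=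
  exists i j k : I,
    [/\ i != j, j != k & i != k] /\
    [/\ endogenous attr S i, endogenous attr S j & endogenous attr S k] /\
    [/\ path_using attr S (attrQ attr S :\: (H :|: attr k)) i j,
        path_using attr S (attrQ attr S :\: (H :|: attr i)) j k &
        path_using attr S (attrQ attr S :\: (H :|: attr j)) i k].

Definition dominated_by (I A : finType) (attr : I -> {set A}) (S : {set I}) (H : {set A})
  (j i : I) : bool :=
  [&& attr i \subset attr j,
      [forall k in S, (attr i :\: attr k != set0) ==>
                      (attr j :&: attr k \subset attr i :&: H)] &
      (attr i \subset H) || (H \subset attr i)].

Definition non_dominated (I A : finType) (attr : I -> {set A}) (S : {set I}) (H : {set A})
  (j : I) : bool :=
  (j \in S) && ~~ [exists i in S, (i != j) && dominated_by attr S H j i].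

Definition strand (I A : finType) (attr : I -> {set A}) (S : {set I}) (H : {set A}) : Prop :=
  exists i j : I,
    [/\ non_dominated attr S H i, non_dominated attr S H j,
        H :&: attr i != H :&: attr j &
        (attr i :&: attr j) :\: H != set0].

(* relations of the head join (non-dominated relations restricted to H)
   that contain attribute a *)
Definition hj_rels (I A : finType) (attr : I -> {set A}) (S : {set I}) (H : {set A})
  (a : A) : {set I} :=
  [set i | non_dominated attr S H i & a \in attr i :&: H].

Definition head_join_hierarchical (I A : finType) (attr : I -> {set A}) (S : {set I})
  (H : {set A}) : Prop :=
  forall a b : A,
    let Ra := hj_rels attr S H a in let Rb := hj_rels attr S H b in
    [|| Ra \subset Rb, Rb \subset Ra | [disjoint Ra & Rb]].

Definition hard_structure (I A : finType) (attr : I -> {set A}) (S : {set I}) (H : {set A}) : Prop :=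
  triad_like attr S H \/ strand attr S H \/ ~ head_join_hierarchical attr S H.

Definition share (I A : finType) (attr : I -> {set A}) : rel I :=
  fun i j => attr i :&: attr j != set0.

Definition component (I A : finType) (attr : I -> {set A}) (r : I) : {set I} :=
  [set j | connect (share attr) r j].

From mathcomp Require Import all_boot.
Set Implicit Arguments. Unset Strict Implicit. Unset Printing Implicit Defensive.

(* Relations in different connected components share no attribute, so paths
   through shared non-head attributes, endogeneity and the strand condition
   are all local to a component C, and so is a dominator, whose attributes
   form a nonempty subset of those of the relation it dominates.  The one
   non-local ingredient is condition (3) of dominance: restricting the head
   to HC := head ∩ attr(C) can only create new dominators R_i with
   HC ⊆ attr(R_i).  Hence a non-dominated relation missing an attribute of
   HC stays non-dominated in C; this carries the two crossing relations of a
   non-nested pair of head-join classes into the component of a relation R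
   common to both classes.  From R itself one descends along dominators in
   C, which all contain HC, to a non-dominated relation still common to both
   classes; the descent terminates because attr is injective, so attribute
   sets shrink strictly. *)


Lemma eq_connect_in (T : finType) (e e' : rel T) (a : {pred T}) :
  closed e a -> {in a, e =2 e'} -> {in a, connect e =2 connect e'}.
Proof.
move=> cl_a ee' x ax y.
have path_in (e1 e2 : rel T) : (forall u v, u \in a -> e1 u v -> v \in a) -> {in a, e1 =2 e2} ->
    forall z p, z \in a -> path e1 z p -> path e2 z p.
  move=> inv e12 z p; elim: p z => [//|v p IHp] z az /= /andP[ezv pv].
  by rewrite -e12 // ezv (IHp v (inv z v az ezv)).
have inv_e u v : u \in a -> e u v -> v \in a by move=> au /cl_a <-.
have inv_e' u v : u \in a -> e' u v -> v \in a by move=> au; rewrite -ee' //; exact: inv_e.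
apply/connectP/connectP => -[p pth ->]; exists p => //.
  exact: path_in inv_e ee' _ _ ax pth.
by apply: path_in inv_e' _ _ _ ax pth => u au v; rewrite ee'.
Qed.

Definition nested_or_disjoint (T : finType) (X Y : {set T}) : bool :=
  [|| X \subset Y, Y \subset X | [disjoint X & Y]].

Lemma nested_or_disjointNE (T : finType) (X Y : {set T}) :
  ~~ nested_or_disjoint X Y = [&& X :\: Y != set0, Y :\: X != set0 & X :&: Y != set0].
Proof. by rewrite !negb_or -!setD_eq0 -setI_eq0. Qed.

Lemma nested_or_disjointI (T : finType) (X Y Z : {set T}) :
  nested_or_disjoint X Y -> nested_or_disjoint (X :&: Z) (Y :&: Z).
Proof.
case/or3P=> [XY | YX | dXY]; apply/or3P; [apply: Or31 | apply: Or32 | apply: Or33].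
- exact: setSI.
- exact: setSI.
- exact: disjointWl (subsetIl _ _) (disjointWr (subsetIl _ _) dXY).
Qed.

Section Queries.

Variables (I A : finType) (attr : I -> {set A}).

Lemma mem_attrQ (S : {set I}) i x : i \in S -> x \in attr i -> x \in attrQ attr S.
Proof. by move=> iS; apply/subsetP; exact: bigcup_sup. Qed.

Lemma share_sym : symmetric (share attr).
Proof. by move=> i j; rewrite /share setIC. Qed.

Lemma share_of_mem i j x : x \in attr i -> x \in attr j -> share attr i j.
Proof. by move=> xi xj; apply/set0Pn; exists x; rewrite inE xi xj. Qed.

Lemma closed_component r : closed (share attr) (component attr r).
Proof.
move=> i j sij; rewrite !inE.
exact: connect_closed (sym_connect_sym share_sym) r i j sij.
Qed.

Lemma mem_component r : r \in component attr r.
Proof. by rewrite inE connect0. Qed.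

Lemma path_using_mem (S : {set I}) (X : {set A}) i j :
  i \in S -> path_using attr S X i j -> j \in S.
Proof.
move=> iS /connectP[p]; case/lastP: p => [_ -> //| p k].
by rewrite rcons_path last_rcons => /andP[_ /and3P[]] _ + _ ->.
Qed.

Lemma dominated_trans (S : {set I}) (H : {set A}) j i l :
  dominated_by attr S H j i -> dominated_by attr S H i l -> dominated_by attr S H j l.
Proof.
move=> /and3P[ij /forall_inP dom_ij _] /and3P[li /forall_inP dom_li hl].
apply/and3P; split=> //; first exact: subset_trans li ij.
apply/forall_inP => k kS; apply/implyP => /set0Pn[x]; rewrite inE => /andP[xk xl].
have /(implyP (dom_ij k kS)) sub_ij : attr i :\: attr k != set0.
  by apply/set0Pn; exists x; rewrite inE xk (subsetP li).
have /(implyP (dom_li k kS)) sub_li : attr l :\: attr k != set0.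
  by apply/set0Pn; exists x; rewrite inE xk xl.
apply/subsetP => y; rewrite inE => /andP[yj yk].
have /setIP[yi _] : y \in attr i :&: H by apply: (subsetP sub_ij); rewrite inE yj yk.
by apply: (subsetP sub_li); rewrite inE yi yk.
Qed.

Lemma exists_non_dominated_dominator (S : {set I}) (H : {set A}) j :
  injective attr -> j \in S ->
  exists2 w, non_dominated attr S H w & (w == j) || dominated_by attr S H j w.
Proof.
move=> attr_inj; elim: {j}_.+1 {-2}j (ltnSn #|attr j|) => // n IHn j lt_j_n jS.
have [ndj | ] := boolP (non_dominated attr S H j); first by exists j; rewrite ?eqxx.
rewrite /non_dominated jS negbK => /exists_inP[i iS /andP[ij dji]].
have lt_ij : #|attr i| < #|attr j|.
  apply: proper_card; rewrite properEneq; case/and3P: dji => -> _ _.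
  by rewrite andbT (inj_eq attr_inj).
have [w ndw /orP[/eqP wi | diw]] := IHn i (leq_trans lt_ij lt_j_n) iS.
  by exists w; rewrite // wi dji orbT.
by exists w; rewrite // (dominated_trans dji diw) orbT.
Qed.

End Queries.

Section ShareClosed.

Variables (I A : finType) (attr : I -> {set A}) (head : {set A}).
Hypothesis attr_nonempty : forall i, attr i != set0.
Variable C : {set I}.
Hypothesis C_closed : closed (share attr) C.

Local Notation HC := (head :&: attrQ attr C).

Lemma closed_meet i j x : i \in C -> x \in attr i -> x \in attr j -> j \in C.
Proof. by move=> iC xi xj; rewrite -(C_closed (share_of_mem xi xj)). Qed.

Lemma closed_sub i j : j \in C -> attr i \subset attr j -> i \in C.
Proof.
move=> jC /subsetP ij; have /set0Pn[x xi] := attr_nonempty i.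
exact: closed_meet jC (ij x xi) xi.
Qed.

Lemma setI_head_attr i : i \in C -> HC :&: attr i = head :&: attr i.
Proof.
move=> iC; apply/setP => x; rewrite !inE.
by case xi: (x \in attr i); rewrite ?andbF // (mem_attrQ iC xi) !andbT.
Qed.

Lemma endogenous_component j :
  j \in C -> endogenous attr C j = endogenous attr [set: I] j.
Proof.
move=> jC; rewrite /endogenous /exogenous jC in_setT /=; congr (~~ _).
apply/exists_inP/exists_inP.
  by case=> i _ ij; exists i; rewrite ?in_setT.
by case=> i _ ij; exists i => //; exact: closed_sub jC (proper_sub ij).
Qed.

Lemma path_using_component (Y : {set A}) i j : i \in C ->
  path_using attr C (attrQ attr C :\: (HC :|: Y)) i j =
  path_using attr [set: I] (attrQ attr [set: I] :\: (head :|: Y)) i j.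
Proof.
move=> iC; symmetry; apply: eq_connect_in iC j => [u v | u uC v].
  by case/and3P=> _ _ /set0Pn[x /setIP[/setIP[xu xv] _]]; exact: C_closed (share_of_mem xu xv).
rewrite /step uC !in_setT; case vC: (v \in C); last first.
  apply/negbTE/set0Pn => -[x /setIP[/setIP[xu xv] _]].
  by rewrite (closed_meet uC xu xv) in vC.
congr (_ != set0); apply/setP => x; rewrite !inE.
case xu: (x \in attr u); rewrite ?andbF //= (mem_attrQ uC xu) (mem_attrQ (in_setT u) xu).
by rewrite !andbT.
Qed.

Lemma dominated_component j i : j \in C ->
  dominated_by attr [set: I] head j i -> i \in C /\ dominated_by attr C HC j i.
Proof.
move=> jC /and3P[ij /forall_inP dom_ij hi]; have iC := closed_sub jC ij.
split=> //; apply/and3P; split=> //.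
  apply/forall_inP => k _; apply/implyP => /(implyP (dom_ij k (in_setT k))).
  move/subsetP=> sub; apply/subsetP => x /sub /setIP[xi xh].
  by rewrite !inE xi xh (mem_attrQ iC xi).
case/orP: hi => [ih | hi]; apply/orP; [left | right].
  by rewrite subsetI ih; apply/subsetP => x; exact: mem_attrQ iC.
exact: subset_trans (subsetIl _ _) hi.
Qed.

Lemma dominated_setT j i : j \in C -> attr i \subset head ->
  dominated_by attr C HC j i -> dominated_by attr [set: I] head j i.
Proof.
move=> jC ih /and3P[ij /forall_inP dom_ij _]; apply/and3P; split; rewrite ?ih //.
apply/forall_inP => k _; apply/implyP => ik.
have [kC | kNC] := boolP (k \in C).
  exact: subset_trans (implyP (dom_ij k kC) ik) (setIS _ (subsetIl _ _)).
apply/subsetP => x /setIP[xj xk].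
by rewrite (closed_meet jC xj xk) in kNC.
Qed.

Lemma non_dominated_setT p :
  non_dominated attr C HC p -> non_dominated attr [set: I] head p.
Proof.
case/andP=> pC ndp; rewrite /non_dominated in_setT; apply: contra ndp.
case/exists_inP=> i _ /andP[ip dpi]; have [iC dCpi] := dominated_component pC dpi.
by apply/exists_inP; exists i; rewrite ?ip.
Qed.

Lemma component_dominator p i : p \in C -> non_dominated attr [set: I] head p ->
  i != p -> dominated_by attr C HC p i -> HC \subset attr i.
Proof.
move=> pC /andP[_ ndp] ip dpi; have /and3P[_ _ /orP[iHC | //]] := dpi.
case/negP: ndp; apply/exists_inP; exists i; rewrite ?in_setT ?ip //=.
exact: dominated_setT pC (subset_trans iHC (subsetIl _ _)) dpi.
Qed.

Lemma non_dominated_component p : p \in C -> non_dominated attr [set: I] head p ->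
  ~~ (HC \subset attr p) -> non_dominated attr C HC p.
Proof.
move=> pC ndp HCp; rewrite /non_dominated pC; apply/exists_inP => -[i _ /andP[ip dpi]].
have /and3P[ip_sub _ _] := dpi.
by case/negP: HCp; exact: subset_trans (component_dominator pC ndp ip dpi) ip_sub.
Qed.

Lemma non_dominated_strand i j x : i \in C -> j \in C ->
  non_dominated attr [set: I] head i -> head :&: attr i != head :&: attr j ->
  x \in attr i -> x \in attr j -> x \notin head -> non_dominated attr C HC i.
Proof.
move=> iC jC ndi hij xi xj xNh; rewrite /non_dominated iC.
apply/exists_inP => -[l _ /andP[li dil]].
have HCl := component_dominator iC ndi li dil.
have /and3P[li_sub /forall_inP dom_il _] := dil.
have lj : attr l \subset attr j.
  apply/subsetP => y yl; apply/negPn/negP => yNj.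
  have /(implyP (dom_il j jC)) /subsetP/(_ x) : attr l :\: attr j != set0.
    by apply/set0Pn; exists y; rewrite inE yNj yl.
  by rewrite !inE xi xj (negbTE xNh) andbF => /(_ isT).
case/eqP: hij; rewrite -!setI_head_attr //.
by rewrite (setIidPl (subset_trans HCl li_sub)) (setIidPl (subset_trans HCl lj)).
Qed.

Local Notation hjS := (hj_rels attr [set: I] head).
Local Notation hjC := (hj_rels attr C HC).

Lemma hj_rels_component a :
  hjC a = hjS a :&: [set p | non_dominated attr C HC p].
Proof.
apply/setP => p; rewrite !inE andbC.
have [ndp | _] := boolP (non_dominated attr C HC p); last by rewrite !andbF.
have /andP[pC _] := ndp; rewrite (non_dominated_setT ndp).
by case ap: (a \in attr p); rewrite //= (mem_attrQ pC ap) !andbT.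
Qed.

Lemma hj_rels_component_setD a b r p : r \in C -> r \in hjS a :&: hjS b ->
  p \in hjS a :\: hjS b -> p \in hjC a :\: hjC b.
Proof.
rewrite !inE => rC /andP[/andP[_ /andP[ar _]] /andP[_ /andP[br bh]]].
case/andP=> pNb /andP[ndp /andP[ap ah]].
have pC := closed_meet rC ar ap.
have bp : b \notin attr p by apply: contra pNb => bp; rewrite ndp bp bh.
have ndCp : non_dominated attr C HC p.
  apply: non_dominated_component pC ndp _; apply/subsetPn; exists b => //.
  by rewrite inE bh (mem_attrQ rC br).
by rewrite ndCp /= ap ah (mem_attrQ pC ap) negb_and bp.
Qed.

Lemma hj_rels_component_meet a b r : injective attr -> r \in C ->
  r \in hjS a :&: hjS b -> hjC a :&: hjC b != set0.
Proof.
rewrite !inE => attr_inj rC /andP[/andP[ndr /andP[ar ah]] /andP[_ /andP[br bh]]].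
have [w ndw wr] := exists_non_dominated_dominator HC attr_inj rC.
have /andP[wC _] := ndw.
have aHC : a \in HC by rewrite inE ah (mem_attrQ rC ar).
have bHC : b \in HC by rewrite inE bh (mem_attrQ rC br).
have [aw bw] : a \in attr w /\ b \in attr w.
  have [/eqP-> // | wNr] := boolP (w == r).
  rewrite (negbTE wNr) /= in wr.
  by have /subsetP HCw := component_dominator rC ndr wNr wr; rewrite !HCw.
apply/set0Pn; exists w.
by rewrite !inE ndw aw ah bw bh (mem_attrQ wC aw) (mem_attrQ wC bw).
Qed.

Lemma head_join_hierarchical_component :
  head_join_hierarchical attr [set: I] head -> head_join_hierarchical attr C HC.
Proof.
move=> hier a b /=; rewrite !hj_rels_component; exact: nested_or_disjointI (hier a b).
Qed.

Lemma not_nested_component a b r : injective attr -> r \in C ->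
  r \in hjS a :&: hjS b -> ~~ nested_or_disjoint (hjS a) (hjS b) ->
  ~~ nested_or_disjoint (hjC a) (hjC b).
Proof.
move=> attr_inj rC rab; rewrite !nested_or_disjointNE.
case/and3P=> /set0Pn[p pab] /set0Pn[q qba] _; apply/and3P; split.
- by apply/set0Pn; exists p; exact: hj_rels_component_setD rC rab pab.
- by apply/set0Pn; exists q; apply: hj_rels_component_setD rC _ qba; rewrite setIC.
- exact: hj_rels_component_meet attr_inj rC rab.
Qed.

End ShareClosed.

Section Components.

Variables (I A : finType) (attr : I -> {set A}) (head : {set A}).
Hypothesis attr_nonempty : forall i, attr i != set0.

Lemma triad_like_components : triad_like attr [set: I] head <->
  exists r, triad_like attr (component attr r) (head :&: attrQ attr (component attr r)).
Proof.
split.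
  case=> i [j [k [ijk [[ei ej ek] [pij pjk pik]]]]]; exists i.
  have C_closed := closed_component (attr := attr) i; have iC := mem_component attr i.
  rewrite -!(path_using_component head C_closed) // in pij pik.
  have jC := path_using_mem iC pij; have kC := path_using_mem iC pik.
  rewrite -(path_using_component head C_closed) // in pjk.
  by exists i, j, k; rewrite !(endogenous_component attr_nonempty C_closed).
case=> r [i [j [k [ijk [[ei ej ek] [pij pjk pik]]]]]].
have C_closed := closed_component (attr := attr) r.
have /andP[iC _] := ei; have /andP[jC _] := ej; have /andP[kC _] := ek.
rewrite !(path_using_component head C_closed) // in pij pjk pik.
by exists i, j, k; rewrite -!(endogenous_component attr_nonempty C_closed).
Qed.

Lemma strand_components : strand attr [set: I] head <->
  exists r, strand attr (component attr r) (head :&: attrQ attr (component attr r)).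
Proof.
split.
  case=> i [j [ndi ndj hij /set0Pn[x]]]; rewrite !inE => /andP[xNh /andP[xi xj]].
  have C_closed := closed_component (attr := attr) i; have iC := mem_component attr i.
  have jC := closed_meet C_closed iC xi xj.
  exists i, i, j; split.
  - exact: (non_dominated_strand C_closed iC jC ndi hij xi xj xNh).
  - by apply: (non_dominated_strand C_closed jC iC ndj _ xj xi xNh); rewrite eq_sym.
  - by rewrite !setI_head_attr.
  - by apply/set0Pn; exists x; rewrite !inE xi xj (negbTE xNh).
case=> r [i [j [ndi ndj hij /set0Pn[x]]]]; rewrite !inE => /andP[xNh /andP[xi xj]].
have C_closed := closed_component (attr := attr) r; have /andP[iC _] := ndi.
have /andP[jC _] := ndj.
rewrite !setI_head_attr // in hij.
exists i, j; split=> //.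
- exact: (non_dominated_setT attr_nonempty C_closed ndi).
- exact: (non_dominated_setT attr_nonempty C_closed ndj).
- rewrite (mem_attrQ iC xi) andbT in xNh.
  by apply/set0Pn; exists x; rewrite !inE xi xj xNh.
Qed.

Lemma not_head_join_hierarchical_components : injective attr ->
  ~ head_join_hierarchical attr [set: I] head <->
  exists r, ~ head_join_hierarchical attr (component attr r)
                (head :&: attrQ attr (component attr r)).
Proof.
move=> attr_inj; split=> [nhier | [r nhierC hier]]; last first.
  exact/nhierC/(head_join_hierarchical_component attr_nonempty (closed_component r)).
pose hjS := hj_rels attr [set: I] head.
have /existsP[a /existsP[b nab]] : [exists a, exists b, ~~ nested_or_disjoint (hjS a) (hjS b)].
  apply: contra_notT nhier => /existsPn nhier a b /=.
  by have /existsPn/(_ b)/negPn := nhier a.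
have := nab; rewrite nested_or_disjointNE => /and3P[_ _ /set0Pn[r rab]].
exists r => hierC; have C_closed := closed_component (attr := attr) r.
case/negP: (not_nested_component C_closed attr_inj (mem_component attr r) rab nab).
exact: hierC a b.
Qed.

End Components.

Unset Implicit Arguments.

Theorem lemma9 (I A : finType) (attr : I -> {set A}) (head : {set A})
  (attr_inj : injective attr)
  (attr_nonempty : forall i : I, attr i != set0)
  (head_sub : head \subset attrQ attr [set: I]) :
  hard_structure attr [set: I] head <->
  exists r : I, hard_structure attr (component attr r)
                  (head :&: attrQ attr (component attr r)).
Proof.
have triadE := triad_like_components head attr_nonempty.
have strandE := strand_components head attr_nonempty.
have hierE := not_head_join_hierarchical_components head attr_nonempty attr_inj.
split=> [[/triadE | [/strandE | /hierE]] [r hr] | [r [hr | [hr | hr]]]].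
- by exists r; left.
- by exists r; right; left.
- by exists r; right; right.
- by left; apply/triadE; exists r.
- by right; left; apply/strandE; exists r.
- by right; right; apply/hierE; exists r.
Qed.
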